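(* Let $R$ be a $*$-ring with unity, $a,b\in R$ with $a\lesssim b$, and $h$ a central projection of $R$. Then $ha\lesssim hb$.
   Context: Natural partial order: $a\leq b$ iff there is $x\in R$ with $a=xa=xb=ax^*=bx^*$. Equivalence: $a\sim b$ iff there exist $x,y\in R$ with $aa^*=xx^*$, $bb^*=yy^*$, $a^*a=y^*y$, $b^*b=x^*x$, $x=ax=xb$ and $y=by=ya$. Dominance: $a\lesssim b$ iff $a\sim c$ and $c\leq b$ for some $c\in R$. A projection is $e=e^2=e^*$; central means commuting with all elements. *)

From mathcomp Require Import all_boot all_algebra.
Set Implicit Arguments. Unset Strict Implicit. Unset Printing Implicit Defensive.
Import GRing.Theory.
Local Open Scope ring_scope.

Definition is_involution (R : pzRingType) (star : R -> R) : Prop :=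
  [/\ forall x y : R, star (x + y) = star x + star y,
      forall x y : R, star (x * y) = star y * star x
    & forall x : R, star (star x) = x].

Definition star_le (R : pzRingType) (star : R -> R) (a b : R) : Prop :=
  exists x : R, [/\ a = x * a, a = x * b, a = a * star x & a = b * star x].

Definition star_equiv (R : pzRingType) (star : R -> R) (a b : R) : Prop :=
  exists x y : R,
    [/\ a * star a = x * star x, b * star b = y * star y,
        star a * a = star y * y, star b * b = star x * x
      & [/\ x = a * x, x = x * b, y = b * y & y = y * a]].

Definition star_dom (R : pzRingType) (star : R -> R) (a b : R) : Prop :=
  exists c : R, star_equiv star a c /\ star_le star c b.

Definition projection (R : pzRingType) (star : R -> R) (e : R) : Prop :=
  e * e = e /\ star e = e.

Definition central (R : pzRingType) (e : R) : Prop :=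
  forall r : R, e * r = r * e.

From mathcomp Require Import all_boot all_algebra.
Set Implicit Arguments. Unset Strict Implicit. Unset Printing Implicit Defensive.
Import GRing.Theory.
Local Open Scope ring_scope.

(* For a central projection h, u |-> h u commutes with the involution and
   satisfies (h u)(h v) = h (u v); hence it maps witnesses x, y of a ~ c to
   witnesses h x, h y of h a ~ h c, while c <= b and h c <= h b share the same
   witness. *)

Section CentralMultiplication.

Variables (R : pzRingType) (star : R -> R) (h : R).
Hypothesis hC : central h.

Lemma star_le_mull c b : star_le star c b -> star_le star (h * c) (h * b).
Proof.
case=> z [L1 L2 L3 L4]; exists z; split.
- by rewrite mulrA -hC -mulrA -L1.
- by rewrite mulrA -hC -mulrA -L2.
- by rewrite -mulrA -L3.
- by rewrite -mulrA -L4.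
Qed.

Hypothesis hh : h * h = h.

Lemma central_idem_mulrM u v : (h * u) * (h * v) = h * (u * v).
Proof. by rewrite mulrA -hC mulrA hh -mulrA. Qed.

Hypotheses (starM : forall x y : R, star (x * y) = star y * star x)
           (hs : star h = h).

Lemma star_mull_central u : star (h * u) = h * star u.
Proof. by rewrite starM hs hC. Qed.

Lemma star_equiv_mull a c :
  star_equiv star a c -> star_equiv star (h * a) (h * c).
Proof.
case=> x [y [E1 E2 E3 E4 [Ex1 Ex2 Ey1 Ey2]]].
exists (h * x), (h * y); rewrite !star_mull_central.
by split; [..| split]; rewrite !central_idem_mulrM; congr (h * _).
Qed.

Lemma star_dom_mull a b : star_dom star a b -> star_dom star (h * a) (h * b).
Proof.
case=> c [ac cb]; exists (h * c).
by split; [apply: star_equiv_mull | apply: star_le_mull].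
Qed.

End CentralMultiplication.

Theorem mainTheorem10 (R : pzRingType) (star : R -> R)
  (Hstar : is_involution star) (a b h : R) :
  star_dom star a b -> projection star h -> central h ->
  star_dom star (h * a) (h * b).
Proof.
case: Hstar => _ starM _ ab [hh hs] hC.
exact: star_dom_mull.
Qed.
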